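(* Let $p$ be a prime number and let $1\to\Gamma'\to\Gamma\to\Gamma''$ be an exact sequence of groups. Suppose that $\Gamma''$ has bounded finite subgroups, and that $\Gamma'$ is Jordan (respectively $p$-Jordan, generalized $p$-Jordan, nilpotently Jordan of class at most $c$, nilpotently $p$-Jordan of class at most $c$, generalized nilpotently $p$-Jordan of class at most $c$). Then $\Gamma$ is Jordan (respectively $p$-Jordan, generalized $p$-Jordan, nilpotently Jordan of class at most $c$, nilpotently $p$-Jordan of class at most $c$, generalized nilpotently $p$-Jordan of class at most $c$).
   Context: A group has bounded finite subgroups if there is a constant $B$ such that every finite subgroup has order at most $B$. A group $\Gamma$ is Jordan (resp. nilpotently Jordan of class at most $c$) if there is $J(\Gamma)$ such that every finite subgroup contains a normal subgroup of index at most $J(\Gamma)$ which is abelian (resp. nilpotent of class at most $c$). It is generalized $p$-Jordan (resp. generalized nilpotently $p$-Jordan of class at most $c$) if there is $J(\Gamma)$ such that every finite subgroup of order not divisible by $p$ contains a normal subgroup of index at most $J(\Gamma)$ which is abelian (resp. nilpotent of class at most $c$). It is $p$-Jordan (resp. nilpotently $p$-Jordan of class at most $c$) if there are $J(\Gamma)$, $e(\Gamma)$ such that every finite subgroup $G$ contains a normal subgroup of order coprime to $p$ and index at most $J(\Gamma)|G_p|^{e(\Gamma)}$ which is abelian (resp. nilpotent of class at most $c$), $G_p$ being a $p$-Sylow subgroup of $G$. *)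

From HB Require Import structures.
From mathcomp Require Import all_boot fingroup nilpotent.
Local Open Scope group_scope.
Set Implicit Arguments. Unset Strict Implicit. Unset Printing Implicit Defensive.

(* A finite subgroup of [G] is represented as a finite group [gT] together
   with an injective group homomorphism [f : gT -> G] (its image is the
   finite subgroup; conversely every finite subgroup arises this way). *)

Definition grp_hom (G H : groupType) (f : G -> H) : Prop :=
  forall x y : G, f (x * y)%g = (f x * f y)%g.

Definition fin_subgroup_emb (gT : finGroupType) (G : groupType) (f : gT -> G)
  : Prop := injective f /\ (forall x y : gT, f (x * y)%g = (f x * f y)%g).

Definition exact3 (G1 G G2 : groupType) (i : G1 -> G) (pi : G -> G2) : Prop :=
  [/\ grp_hom i, grp_hom pi, injective i &
      forall x : G, pi x = 1%g <-> exists y : G1, i y = x].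

Definition bounded_finite_subgroups (G : groupType) : Prop :=
  exists B : nat, forall (gT : finGroupType) (f : gT -> G),
    fin_subgroup_emb f -> (#|[set: gT]| <= B)%N.

Definition nil_at_most (gT : finGroupType) (c : nat) (A : {set gT}) : bool :=
  nilpotent A && (nil_class A <= c)%N.

Definition Jordan (G : groupType) : Prop :=
  exists J : nat, forall (gT : finGroupType) (f : gT -> G),
    fin_subgroup_emb f ->
    exists A : {group gT},
      [/\ A <| [set: gT], abelian A & (#|[set: gT] : A| <= J)%N].

Definition nilJordan (c : nat) (G : groupType) : Prop :=
  exists J : nat, forall (gT : finGroupType) (f : gT -> G),
    fin_subgroup_emb f ->
    exists A : {group gT},
      [/\ A <| [set: gT], nil_at_most c A & (#|[set: gT] : A| <= J)%N].

Definition gen_pJordan (p : nat) (G : groupType) : Prop :=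
  exists J : nat, forall (gT : finGroupType) (f : gT -> G),
    fin_subgroup_emb f -> ~~ (p %| #|[set: gT]|) ->
    exists A : {group gT},
      [/\ A <| [set: gT], abelian A & (#|[set: gT] : A| <= J)%N].

Definition gen_nil_pJordan (p c : nat) (G : groupType) : Prop :=
  exists J : nat, forall (gT : finGroupType) (f : gT -> G),
    fin_subgroup_emb f -> ~~ (p %| #|[set: gT]|) ->
    exists A : {group gT},
      [/\ A <| [set: gT], nil_at_most c A & (#|[set: gT] : A| <= J)%N].

(* |G_p| = order of a p-Sylow subgroup = the p-part #|G|`_p *)
Definition pJordan (p : nat) (G : groupType) : Prop :=
  exists J e : nat, forall (gT : finGroupType) (f : gT -> G),
    fin_subgroup_emb f ->
    exists A : {group gT},
      [/\ A <| [set: gT], coprime #|A| p, abelian A &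
          (#|[set: gT] : A| <= J * (#|[set: gT]|`_p) ^ e)%N].

Definition nil_pJordan (p c : nat) (G : groupType) : Prop :=
  exists J e : nat, forall (gT : finGroupType) (f : gT -> G),
    fin_subgroup_emb f ->
    exists A : {group gT},
      [/\ A <| [set: gT], coprime #|A| p, nil_at_most c A &
          (#|[set: gT] : A| <= J * (#|[set: gT]|`_p) ^ e)%N].

From mathcomp Require Import all_boot fingroup nilpotent.
From mathcomp Require Import action morphism quotient.
Set Implicit Arguments. Unset Strict Implicit. Unset Printing Implicit Defensive.
Local Open Scope group_scope.

(* Let F be a finite subgroup of G.  Its intersection K with the image of G'
   is the kernel of F -> G'', so F/K is a finite subgroup of G'' and
   |F : K| <= B, while K is a finite subgroup of G'.  If A is a normal subgroup
   of K with the required property and |K : A| <= j, then K normalises every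
   conjugate of A, so A has at most |F : K| conjugates in F and their
   intersection, the normal core of A in F, has index at most B * j ^ B.  As
   the exponent B does not depend on F, a bound j = J * |K|_p ^ e yields a
   bound of the same shape for F.  Abelianity, nilpotency class and coprimality
   to p pass from A to its core, which is a subgroup of A. *)

Lemma leq_exp2rW m n e : (m <= n)%N -> (m ^ e <= n ^ e)%N.
Proof. by move=> le_mn; elim: e => // e IHe; rewrite !expnS leq_mul. Qed.

Lemma indexgI_leq (gT : finGroupType) (K H L : {group gT}) :
  (#|K : H :&: L| <= #|K : H| * #|K : L|)%N.
Proof.
wlog [sHK sLK] : H L / H \subset K /\ L \subset K => [le_sub | ].
  rewrite -(indexgI K (H :&: L)) -(indexgI K H) -(indexgI K L) setIIr.
  by apply: (le_sub (K :&: H)%G (K :&: L)%G); rewrite !subsetIl.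
have sIK : H :&: L \subset K := subset_trans (subsetIl H L) sHK.
have le_HL_K : (#|(H * L)%g| <= #|K|)%N.
  by apply: subset_leq_card; rewrite mul_subG.
(* Multiplied by |H| |L| = |H L| |H :&: L|, this reads |K| |H L| <= |K| |K|. *)
rewrite -(@leq_pmul2r (#|H| * #|L|)%N) ?muln_gt0 ?cardG_gt0 //.
rewrite {1}mul_cardG mulnCA (mulnC #|K : _|) Lagrange //.
rewrite mulnACA [(#|K : H| * _)%N]mulnC [(#|K : L| * _)%N]mulnC !Lagrange //.
by rewrite leq_mul2r le_HL_K orbT.
Qed.

Lemma indexg_bigcapJ (gT : finGroupType) (K A : {group gT}) (X : {set gT}) :
    X \subset 'N(K) ->
  (#|K : \bigcap_(x in X) A :^ x| <= #|K : A| ^ #|A :^: X|)%N.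
Proof.
elim: {X}_.+1 {-2}X (ltnSn #|X|) => // n IHn X le_X_n nKX.
have [-> | [x Xx]] := set_0Vmem X.
  by rewrite big_set0 -(indexgI K [set: gT]) setIT indexgg expn_gt0 indexg_gt0.
have nKx : K :^ x = K by apply/normP; apply: subsetP nKX x Xx.
have {}IHn : (#|K : \bigcap_(y in X :\ x) A :^ y|
               <= #|K : A| ^ #|A :^: (X :\ x)|)%N.
  apply: IHn; last exact: subset_trans (subsetDl X [set x]) nKX.
  by move: le_X_n; rewrite (cardsD1 x X) Xx.
rewrite (big_setD1 x Xx) -[X in A :^: X](setD1K Xx) [_ :^: _]imsetU1 cardsU1 /=.
case: imsetP => [[y Xy ->] | _].
  by rewrite (setIidPr (bigcap_inf y Xy)).
rewrite expnS; apply: leq_trans (indexgI_leq _ _ _) (leq_mul _ IHn).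
by rewrite -{1}nKx indexJg.
Qed.

Lemma index_gcore_leq (gT : finGroupType) (G K A : {group gT}) :
  K <| G -> A <| K ->
  (#|G : gcore A G| <= #|G : K| * #|K : A| ^ #|G : K|)%N.
Proof.
case/andP=> sKG nKG /andP[sAK nAK].
have sCK : gcore A G \subset K := subset_trans (gcore_sub A G) sAK.
rewrite -(Lagrange_index sKG sCK) leq_mul2l; apply/orP; right.
apply: leq_trans (indexg_bigcapJ A nKG) (leq_pexp2l (indexg_gt0 K A) _).
rewrite card_conjugates; apply: dvdn_leq (indexg_gt0 _ _) (indexgS G _).
by rewrite subsetI sKG.
Qed.

Lemma nil_at_mostS (gT : finGroupType) c (A B : {group gT}) :
  B \subset A -> nil_at_most c A -> nil_at_most c B.
Proof.
move=> sBA /andP[nilA clA]; have nilB := nilpotentS sBA nilA.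
apply/andP; split=> //; apply/lcn_nil_classP=> //; apply/trivgP.
by rewrite -(lcn_nil_classP c nilA clA) lcnS.
Qed.

Definition subgroup_closed (P : forall gT : finGroupType, {set gT} -> bool) :=
  forall (gT : finGroupType) (A B : {group gT}),
    B \subset A -> P gT A -> P gT B.

Definition injm_closed (P : forall gT : finGroupType, {set gT} -> bool) :=
  forall (aT rT : finGroupType) (D A : {group aT}) (f : {morphism D >-> rT}),
    'injm f -> A \subset D -> P aT A -> P rT (f @* A).

Lemma abelian_subgroup_closed : subgroup_closed (@abelian).
Proof. by move=> gT A B; apply: abelianS. Qed.

Lemma abelian_injm_closed : injm_closed (@abelian).
Proof. by move=> aT rT D A f _ _; apply: morphim_abelian. Qed.

Lemma nil_at_most_subgroup_closed c :
  subgroup_closed (fun gT => @nil_at_most gT c).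
Proof. by move=> gT A B; apply: nil_at_mostS. Qed.

Lemma nil_at_most_injm_closed c : injm_closed (fun gT => @nil_at_most gT c).
Proof.
by move=> aT rT D A f injf sAD; rewrite /nil_at_most injm_nil ?nil_class_injm.
Qed.

Section GroupHom.
Variables (G H : groupType) (f : G -> H).
Hypothesis fM : grp_hom f.

Lemma grp_hom1 : f 1 = 1.
Proof. by apply: (@mulIg _ (f 1)); rewrite -fM !mul1g. Qed.

Lemma grp_homV x : f x^-1 = (f x)^-1.
Proof. by apply: (@mulIg _ (f x)); rewrite -fM !mulVg grp_hom1. Qed.

End GroupHom.

Section HomKernel.
Variables (gT : finGroupType) (H : groupType) (phi : gT -> H).
Hypothesis phiM : grp_hom phi.

Definition hker := [set x | phi x == 1].

Lemma group_set_hker : group_set hker.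
Proof.
apply/group_setP; split=> [|x y]; rewrite !inE ?grp_hom1 //.
by rewrite phiM => /eqP-> /eqP->; rewrite mulg1.
Qed.

Definition hker_group := Group group_set_hker.

Lemma hker_normal : hker <| [set: gT].
Proof.
rewrite /normal subsetT; apply/subsetP=> y _; rewrite inE.
apply/subsetP=> _ /imsetP[x + ->]; rewrite !inE /conjg !phiM grp_homV //.
by move=> /eqP->; rewrite mul1g mulVg.
Qed.

Lemma hker_norm x : x \in 'N(hker_group).
Proof. exact: subsetP (normal_norm hker_normal) x (in_setT x). Qed.

Lemma coset_hker_eq x y :
  (coset hker_group x == coset hker_group y) = (phi x == phi y).
Proof.
rewrite (sameP eqP (rcoset_kercosetP (hker_norm x) (hker_norm y))).
by rewrite mem_rcoset inE phiM grp_homV // divg_eq1.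
Qed.

Definition quotient_hker_emb (X : coset_of hker_group) := phi (repr X).

Lemma fin_subgroup_emb_quotient_hker : fin_subgroup_emb quotient_hker_emb.
Proof.
split=> [X Y eXY | X Y]; rewrite /quotient_hker_emb.
  rewrite -(coset_reprK X) -(coset_reprK Y); apply/eqP.
  by rewrite coset_hker_eq; apply/eqP.
apply/eqP; rewrite -phiM -coset_hker_eq (coset_reprK (X * Y)).
by rewrite morphM ?hker_norm //= (coset_reprK X) (coset_reprK Y).
Qed.

Lemma index_hker_leq (B : nat) :
    (forall (hT : finGroupType) (h : hT -> H),
       fin_subgroup_emb h -> #|[set: hT]| <= B)%N ->
  (#|[set: gT] : hker| <= B)%N.
Proof.
move=> bounded_H; rewrite -[hker]/(gval hker_group).
rewrite -card_quotient ?normal_norm ?hker_normal //.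
apply: leq_trans (subset_leq_card (subsetT _)) _.
exact: bounded_H fin_subgroup_emb_quotient_hker.
Qed.

End HomKernel.

Lemma fin_subgroup_emb_factor (hT : finGroupType) (G1 G : groupType)
    (i : G1 -> G) (f : hT -> G) :
  grp_hom i -> injective i -> fin_subgroup_emb f ->
  (forall x, exists y, i y = f x) -> exists g : hT -> G1, fin_subgroup_emb g.
Proof.
move=> iM inj_i [inj_f fM] im_f.
have im_fb x : exists y, i y == f x by have [y <-] := im_f x; exists y.
pose g x := xchoose (im_fb x).
have igE x : i (g x) = f x by apply/eqP/(xchooseP (im_fb x)).
exists g; split=> [x y eg | x y]; first by apply: inj_f; rewrite -!igE eg.
by apply: inj_i; rewrite iM !igE fM.
Qed.

Lemma fin_subgroup_emb_sgval (gT : finGroupType) (G : groupType) (f : gT -> G)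
    (K : {group gT}) :
  fin_subgroup_emb f -> fin_subgroup_emb (fun u : subg_of K => f (sgval u)).
Proof. by case=> inj_f fM; split=> [u v /inj_f/subg_inj | u v /=]. Qed.

Section Extension.
Variables (G1 G G2 : groupType) (i : G1 -> G) (pi : G -> G2) (B : nat).
Hypothesis exact_i_pi : exact3 i pi.
Hypothesis bounded_G2 : forall (hT : finGroupType) (h : hT -> G2),
  fin_subgroup_emb h -> (#|[set: hT]| <= B)%N.

Lemma fin_subgroup_kernel (gT : finGroupType) (f : gT -> G) :
    fin_subgroup_emb f ->
  exists2 K : {group gT}, K <| [set: gT] /\ (#|[set: gT] : K| <= B)%N &
    exists g : subg_of K -> G1, fin_subgroup_emb g.
Proof.
move=> femb; have [inj_f fM] := femb; have [iM piM inj_i ker_pi] := exact_i_pi.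
have phiM : grp_hom (fun x => pi (f x)) by move=> x y; rewrite fM piM.
exists (hker_group phiM).
  by split; [exact: hker_normal | exact: index_hker_leq].
apply: fin_subgroup_emb_factor iM inj_i (fin_subgroup_emb_sgval _ femb) _ => u.
by apply/ker_pi; have := subgP u; rewrite inE => /eqP.
Qed.

Lemma lift_normal_subgroup (P : forall gT : finGroupType, {set gT} -> bool)
    (gT : finGroupType) (f : gT -> G) (J : nat) :
    subgroup_closed P -> injm_closed P -> fin_subgroup_emb f ->
    (forall (hT : finGroupType) (g : hT -> G1), fin_subgroup_emb g ->
       #|[set: hT]| %| #|[set: gT]| ->
     exists A : {group hT},
       [/\ A <| [set: hT], P hT A & (#|[set: hT] : A| <= J)%N]) ->
  exists A : {group gT},
    [/\ A <| [set: gT], P gT A & (#|[set: gT] : A| <= B * J ^ B)%N].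
Proof.
move=> P_sub P_injm femb JG1.
have [K [nK iK] [g gemb]] := fin_subgroup_kernel femb.
have dvd_KG : #|[subg K]| %| #|[set: gT]|.
  by rewrite -(card_isog (isog_subg K)) cardSg ?subsetT.
have [A' [nA' PA' iA']] := JG1 _ g gemb dvd_KG.
have nAK : sgval @* A' <| K by rewrite -(im_sgval K) morphim_normal.
exists (gcore (sgval @* A') [set: gT])%G; split.
- exact: gcore_normal (subsetT _).
- apply: P_sub (gcore_sub _ _) _.
  exact: P_injm (injm_sgval K) (subsetT _) PA'.
apply: leq_trans (index_gcore_leq nK nAK) _.
have -> : #|K : sgval @* A'| = #|[subg K] : A'|.
  rewrite -[X in #|X : _|](im_sgval K).
  exact: index_injm (injm_sgval K) (subsetT _).
apply: leq_mul iK (leq_trans (leq_pexp2l (indexg_gt0 _ _) iK) _).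
exact: leq_exp2rW.
Qed.

Lemma lift_coprime_normal_subgroup
    (P : forall gT : finGroupType, {set gT} -> bool) (p : nat)
    (gT : finGroupType) (f : gT -> G) (J e : nat) :
    subgroup_closed P -> injm_closed P -> fin_subgroup_emb f ->
    (forall (hT : finGroupType) (g : hT -> G1), fin_subgroup_emb g ->
     exists A : {group hT},
       [/\ A <| [set: hT], coprime #|A| p, P hT A &
           (#|[set: hT] : A| <= J * #|[set: hT]|`_p ^ e)%N]) ->
  exists A : {group gT},
    [/\ A <| [set: gT], coprime #|A| p, P gT A &
        (#|[set: gT] : A| <= B * J ^ B * #|[set: gT]|`_p ^ (e * B))%N].
Proof.
move=> P_sub P_injm femb JG1.
pose P_coprime (hT : finGroupType) (A : {set hT}) := coprime #|A| p && P hT A.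
have P_coprime_sub : subgroup_closed P_coprime.
  move=> hT A A' sA'A /andP[p'A PA].
  by rewrite /P_coprime (coprime_dvdl (cardSg sA'A)) ?(P_sub _ _ _ sA'A).
have P_coprime_injm : injm_closed P_coprime.
  move=> aT rT D A h injh sAD /andP[p'A PA].
  by rewrite /P_coprime card_injm // p'A (P_injm _ _ _ _ _ injh).
have [|A [nA /andP[p'A PA] iA]] :=
  lift_normal_subgroup (J := J * #|[set: gT]|`_p ^ e)
    P_coprime_sub P_coprime_injm femb.
  move=> hT g gemb dvd_hG; have [A [nA p'A PA iA]] := JG1 _ g gemb.
  exists A; split; rewrite /P_coprime ?p'A //; apply: leq_trans iA _.
  by rewrite leq_mul2l leq_exp2rW ?orbT // dvdn_leq ?part_gt0 ?partn_dvd.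
by exists A; split=> //; rewrite -mulnA expnM -expnMn.
Qed.

Lemma Jordan_extension : Jordan G1 -> Jordan G.
Proof.
case=> J JG1; exists (B * J ^ B)%N => gT f femb.
apply: lift_normal_subgroup abelian_subgroup_closed abelian_injm_closed femb _.
by move=> hT g gemb _; apply: (JG1 _ g gemb).
Qed.

Lemma nilJordan_extension c : nilJordan c G1 -> nilJordan c G.
Proof.
case=> J JG1; exists (B * J ^ B)%N => gT f femb.
apply: lift_normal_subgroup (@nil_at_most_subgroup_closed c)
  (@nil_at_most_injm_closed c) femb _.
by move=> hT g gemb _; apply: (JG1 _ g gemb).
Qed.

Lemma gen_pJordan_extension p : gen_pJordan p G1 -> gen_pJordan p G.
Proof.
case=> J JG1; exists (B * J ^ B)%N => gT f femb p'G.
apply: lift_normal_subgroup abelian_subgroup_closed abelian_injm_closed femb _.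
move=> hT g gemb dvd_hG; apply: (JG1 _ g gemb).
by apply: contra p'G => /dvdn_trans->.
Qed.

Lemma gen_nil_pJordan_extension p c :
  gen_nil_pJordan p c G1 -> gen_nil_pJordan p c G.
Proof.
case=> J JG1; exists (B * J ^ B)%N => gT f femb p'G.
apply: lift_normal_subgroup (@nil_at_most_subgroup_closed c)
  (@nil_at_most_injm_closed c) femb _.
move=> hT g gemb dvd_hG; apply: (JG1 _ g gemb).
by apply: contra p'G => /dvdn_trans->.
Qed.

Lemma pJordan_extension p : pJordan p G1 -> pJordan p G.
Proof.
case=> J [e JG1]; exists (B * J ^ B)%N, (e * B)%N => gT f femb.
exact: lift_coprime_normal_subgroup abelian_subgroup_closed abelian_injm_closed
  femb JG1.
Qed.

Lemma nil_pJordan_extension p c : nil_pJordan p c G1 -> nil_pJordan p c G.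
Proof.
case=> J [e JG1]; exists (B * J ^ B)%N, (e * B)%N => gT f femb.
exact: lift_coprime_normal_subgroup (@nil_at_most_subgroup_closed c)
  (@nil_at_most_injm_closed c) femb JG1.
Qed.

End Extension.

Theorem lemma2p8 (p c : nat) (G1 G G2 : groupType)
    (i : G1 -> G) (pi : G -> G2) :
  prime p -> exact3 i pi -> bounded_finite_subgroups G2 ->
  (Jordan G1 -> Jordan G) /\
  (pJordan p G1 -> pJordan p G) /\
  (gen_pJordan p G1 -> gen_pJordan p G) /\
  (nilJordan c G1 -> nilJordan c G) /\
  (nil_pJordan p c G1 -> nil_pJordan p c G) /\
  (gen_nil_pJordan p c G1 -> gen_nil_pJordan p c G).
Proof.
move=> _ exact_i_pi [B bounded_G2].
split; [|split; [|split; [|split; [|split]]]] => JG1.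
- exact (Jordan_extension exact_i_pi bounded_G2 JG1).
- exact (pJordan_extension exact_i_pi bounded_G2 JG1).
- exact (gen_pJordan_extension exact_i_pi bounded_G2 JG1).
- exact (nilJordan_extension exact_i_pi bounded_G2 JG1).
- exact (nil_pJordan_extension exact_i_pi bounded_G2 JG1).
- exact (gen_nil_pJordan_extension exact_i_pi bounded_G2 JG1).
Qed.
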